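(* (i) Let $\hbar\ne0$ and let $V$ be a $Y_\hbar(\mathfrak g)$-module on which $\mathfrak h$ acts semisimply with finite-dimensional weight spaces. Then for every weight $\mu$ of $V$ the series $\xi_i(u)\in\mathrm{End}(V_\mu)[[u^{-1}]]$ and $x_i^\pm(u)\in\mathrm{Hom}(V_\mu,V_{\mu\pm\alpha_i})[[u^{-1}]]$ are expansions at $u=\infty$ of rational functions of $u$. Specifically, with $t_{i,1}=\xi_{i,1}-\frac\hbar2\xi_{i,0}^2$, $x_i^\pm(u)=\hbar u^{-1}\left(1\mp\frac{\mathrm{ad}(t_{i,1})}{2d_iu}\right)^{-1}x^\pm_{i,0}$ and $\xi_i(u)=1+[x_i^+(u),x^-_{i,0}]$. (ii) Let $\mathcal V$ be a $U_q(L\mathfrak g)$-module on which the $K_h$ act semisimply with finite-dimensional weight spaces. Then for every weight $\mu$ and $\varepsilon\in\{\pm\}$ the series $\Psi_i(z)^\pm\in\mathrm{End}(\mathcal V_\mu)[[z^{\mp1}]]$ and $\mathcal X_i^\varepsilon(z)^\pm\in\mathrm{Hom}(\mathcal V_\mu,\mathcal V_{\mu+\varepsilon\alpha_i})[[z^{\mp1}]]$ are the expansions at $z=\infty$ and $z=0$ of rational functions $\Psi_i(z)$, $\mathcal X_i^\varepsilon(z)$. Specifically, with $H_{i,\pm1}=\pm\Psi^\mp_{i,0}\Psi^\pm_{i,\pm1}/(q_i-q_i^{-1})$, $\mathcal X_i^\varepsilon(z)=\left(1-\varepsilon\frac{\mathrm{ad}(H_{i,1})}{[2]_{q_i}z}\right)^{-1}\mathcal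 X^\varepsilon_{i,0}=-z\left(1-\varepsilon z\frac{\mathrm{ad}(H_{i,-1})}{[2]_{q_i}}\right)^{-1}\mathcal X^\varepsilon_{i,-1}$ and $\Psi_i(z)=\Psi^-_{i,0}+(q_i-q_i^{-1})[\mathcal X_i^+(z),\mathcal X^-_{i,0}]$.
   Context: $\mathfrak g$ is the Kac–Moody algebra of a symmetrisable generalized Cartan matrix $(a_{ij})_{i,j\in I}$ with relatively prime positive symmetrising integers $d_i$ and realization $(\mathfrak h,\{\alpha_i\},\{\alpha_i^\vee\})$; $q\in\mathbb C^\times$ is not a root of unity, $q_i=q^{d_i}$, $[2]_{q_i}=q_i+q_i^{-1}$. $Y_\hbar(\mathfrak g)$ is generated by $h\in\mathfrak h,\xi_{i,r},x^\pm_{i,r}$ with relations (Y0) $\xi_{i,0}=d_i\alpha_i^\vee$; (Y1) $\xi$'s and $\mathfrak h$ commute; (Y2) $[h,x^\pm_{j,s}]=\pm\alpha_j(h)x^\pm_{j,s}$; (Y3) $[\xi_{i,r+1},x^\pm_{j,s}]-[\xi_{i,r},x^\pm_{j,s+1}]=\pm\frac{\hbar d_ia_{ij}}2(\xi_{i,r}x^\pm_{j,s}+x^\pm_{j,s}\xi_{i,r})$; (Y4) the same with $\xi_{i,\cdot}$ replaced by $x^\pm_{i,\cdot}$; (Y5) $[x^+_{i,r},x^-_{j,s}]=\delta_{ij}\xi_{i,r+s}$; (Y6) Serre relations. $\xi_i(u)=1+\hbar\sum_r\xi_{i,r}u^{-r-1}$, $x_i^\pm(u)=\hbar\sum_rx^\pm_{i,r}u^{-r-1}$.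 $U_q(L\mathfrak g)$ is generated by $K_h,\Psi^\pm_{i,\pm r},\mathcal X^\pm_{i,k}$ with: (QL0) $\Psi^\pm_{i,0}=K_{\pm d_i\alpha_i^\vee}$; (QL1) $\Psi$'s and $K$'s commute, $K_hK_{h'}=K_{h+h'}$, $K_0=1$; (QL2) $K_h\mathcal X^\pm_{i,k}K_h^{-1}=q^{\pm\alpha_i(h)}\mathcal X^\pm_{i,k}$; (QL3) $\Psi^\varepsilon_{i,k+1}\mathcal X^\pm_{j,l}-q_i^{\pm a_{ij}}\mathcal X^\pm_{j,l}\Psi^\varepsilon_{i,k+1}=q_i^{\pm a_{ij}}\Psi^\varepsilon_{i,k}\mathcal X^\pm_{j,l+1}-\mathcal X^\pm_{j,l+1}\Psi^\varepsilon_{i,k}$; (QL4) analogous relation for $\mathcal X\mathcal X$; (QL5) $[\mathcal X^+_{i,k},\mathcal X^-_{j,l}]=\delta_{ij}\frac{\Psi^+_{i,k+l}-\Psi^-_{i,k+l}}{q_i-q_i^{-1}}$ ($\Psi^\pm_{i,\mp k}=0$ for $k\ge1$); (QL6) $q_i$-Serre relations. Series: $\Psi_i(z)^+=\sum_{r\ge0}\Psi^+_{i,r}z^{-r}$, $\Psi_i(z)^-=\sum_{r\ge0}\Psi^-_{i,-r}z^{r}$, $\mathcal X_i^\pm(z)^+=\sum_{k\ge0}\mathcal X^\pm_{i,k}z^{-k}$, $\mathcal X_i^\pm(z)^-=-\sum_{k<0}\mathcal X^\pm_{i,k}z^{-k}$. *)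

From mathcomp Require Import all_boot all_order all_algebra all_fingroup.
From mathcomp Require Import reals complex.
Set Implicit Arguments.
Unset Strict Implicit.
Unset Printing Implicit Defensive.
Import Order.TTheory GRing.Theory Num.Theory.
Local Open Scope ring_scope.

(* Cartan data.  I = 'I_n ; h = 'rV[C]_m ; alpha_j(h) = (h *m rts) 0 j ;
   alpha_i^vee = row i cor.  Weights of h are column vectors mu : 'cV_m,
   mu(h) = (h *m mu) 0 0.                                               *)

Definition is_GCM (n : nat) (A : 'M[int]_n) : Prop :=
  [/\ forall i, A i i = 2,
      forall i j, i != j -> A i j <= 0
    & forall i j, A i j = 0 <-> A j i = 0].

Definition is_symmetrising (n : nat) (A : 'M[int]_n) (d : 'I_n -> nat) : Prop :=
  [/\ forall i, (0 < d i)%N,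
      forall i j, (d i)%:Z * A i j = (d j)%:Z * A j i
    & \big[gcdn/0%N]_(i < n) d i = 1%N].

Definition is_realization (R : realType) (n m : nat) (A : 'M[int]_n)
    (cor : 'M[R[i]]_(n, m)) (rts : 'M[R[i]]_(m, n)) : Prop :=
  [/\ m = (n + n - \rank (map_mx (fun z : int => z%:~R : R[i]) A))%N,
      row_free cor, row_free rts^T
    & cor *m rts = map_mx (fun z : int => z%:~R : R[i]) A].

Definition alpha (R : realType) (n m : nat) (rts : 'M[R[i]]_(m, n))
    (j : 'I_n) (h : 'rV[R[i]]_m) : R[i] := (h *m rts) 0 j.

Definition sgn (R : realType) (b : bool) : R[i] := if b then 1 else -1.
Definition sgnz (b : bool) : int := if b then 1 else -1.

Section Ops.
Variables (R : realType) (V : lmodType R[i]).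

Definition lin (f : V -> V) : Prop :=
  forall (c : R[i]) (u w : V), f (c *: u + w) = c *: f u + f w.

Definition comm (f g : V -> V) : V -> V := fun v => f (g v) - g (f v).
Definition acomm (f g : V -> V) : V -> V := fun v => f (g v) + g (f v).

Fixpoint nest (l : seq (V -> V)) (z : V -> V) : V -> V :=
  if l is y :: l' then comm y (nest l' z) else z.

Definition prodop (l : seq (V -> V)) : V -> V := foldr (fun f g => f \o g) id l.

Definition fin_dim (S : V -> Prop) : Prop :=
  exists b : seq V, forall v, S v ->
    exists c : 'I_(size b) -> R[i], v = \sum_(k < size b) c k *: b`_k.

(* Expansion at infinity of a rational function (valued in operators
   on the subspace S): f(u) = sum_{r>=0} f r u^{-r} is the expansion of
   g(u)/p(u) with p a nonzero scalar polynomial and g a polynomial,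
   i.e. p(u) f(u) has no negative powers of u.                          *)
Definition rational_at_infty (S : V -> Prop) (f : nat -> V -> V) : Prop :=
  exists p : {poly R[i]}, p != 0 /\
    forall (N : nat) (v : V), (0 < N)%N -> S v ->
      \sum_(k < size p) p`_k *: f (N + k)%N v = 0.

(* fp(z) = sum_{r>=0} fp r z^{-r} and fm(z) = sum_{r>=0} fm r z^r are the
   expansions at z = infinity and z = 0 of the SAME rational function
   g(z)/p(z): p fp = p fm (= g, a polynomial) coefficientwise.          *)
Definition rational_infty_zero (S : V -> Prop) (fp fm : nat -> V -> V) : Prop :=
  exists p : {poly R[i]}, p != 0 /\
    forall (M : int) (v : V), S v ->
      \sum_(k < size p | M <= k%:Z) p`_k *: fp `|k%:Z - M|%N v
      = \sum_(k < size p | k%:Z <= M) p`_k *: fm `|M - k%:Z|%N v.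

End Ops.

(*   hact h = h,  xi i r = xi_{i,r},  x b i r = x^{+/-}_{i,r}            *)
(*   (b = true for +, b = false for -)                                 *)
Section Yangian.
Variables (R : realType) (n m : nat) (A : 'M[int]_n) (d : 'I_n -> nat)
  (cor : 'M[R[i]]_(n, m)) (rts : 'M[R[i]]_(m, n)) (hbar : R[i])
  (V : lmodType R[i]) (hact : 'rV[R[i]]_m -> V -> V)
  (xi : 'I_n -> nat -> V -> V) (x : bool -> 'I_n -> nat -> V -> V).

Definition Yangian_module : Prop :=
  ((forall h, lin (hact h)) /\ (forall i r, lin (xi i r)) /\
      (forall b i r, lin (x b i r))) /\
  ((forall (c : R[i]) h h' v, hact (c *: h + h') v = c *: hact h v + hact h' v)) /\
  (
      (forall i v, xi i 0 v = hact ((d i)%:R *: row i cor) v)) /\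
  (
      (forall i j r s v, comm (xi i r) (xi j s) v = 0) /\
      (forall h i r v, comm (hact h) (xi i r) v = 0) /\
      (forall h h' v, comm (hact h) (hact h') v = 0)) /\
  (
      (forall h b j s v,
         comm (hact h) (x b j s) v = (sgn R b * alpha rts j h) *: x b j s v)) /\
  (
      (forall b i j r s v,
         comm (xi i r.+1) (x b j s) v - comm (xi i r) (x b j s.+1) v
         = (sgn R b * hbar * (d i)%:R * (A i j)%:~R / 2) *: acomm (xi i r) (x b j s) v)) /\
  (
      (forall b i j r s v,
         comm (x b i r.+1) (x b j s) v - comm (x b i r) (x b j s.+1) v
         = (sgn R b * hbar * (d i)%:R * (A i j)%:~R / 2) *: acomm (x b i r) (x b j s) v)) /\
  (
      (forall i j r s v,
         comm (x true i r) (x false j s) v = if i == j then xi i (r + s)%N v else 0)) /\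
  (
      (forall b i j, i != j ->
         forall (r : 'I_`|1 - A i j|%N -> nat) (s : nat) (v : V),
         \sum_(sigma : 'S_`|1 - A i j|%N)
            nest [seq x b i (r (sigma k)) | k <- enum 'I_`|1 - A i j|%N] (x b j s) v
         = 0)).

Definition hwt (mu : 'cV[R[i]]_m) (v : V) : Prop :=
  forall h, hact h v = (h *m mu) 0 0 *: v.

Definition h_semisimple_findim : Prop :=
  (forall v : V, exists (N : nat) (mus : 'I_N -> 'cV[R[i]]_m) (vs : 'I_N -> V),
      v = \sum_(k < N) vs k /\ forall k, hwt (mus k) (vs k))
  /\ (forall mu, fin_dim (hwt mu)).

(* the series  1 + hbar sum_r g r u^{-r-1}  (c0 = id) or
               hbar sum_r g r u^{-r-1}      (c0 = 0), as coefficient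
   sequences of u^{-k}, k >= 0 *)
Definition useries (c0 : V -> V) (g : nat -> V -> V) : nat -> V -> V :=
  fun k => if k is r.+1 then (fun v => hbar *: g r v) else c0.

End Yangian.

(*   Kact h = K_h,  Psi true i r = Psi^+_{i,r},  Psi false i r = Psi^-_{i,-r},
   X b i k = X^{+/-}_{i,k}   (k : int).
   qpow a stands for q^a (a in C): a fixed additive-to-multiplicative
   branch with qpow 1 = q.                                             *)

Definition qint (R : realType) (q : R[i]) (k : nat) : R[i] :=
  (q ^+ k - q^-1 ^+ k) / (q - q^-1).
Definition qfact (R : realType) (q : R[i]) (k : nat) : R[i] :=
  \prod_(1 <= l < k.+1) qint q l.
Definition qbinom (R : realType) (q : R[i]) (N s : nat) : R[i] :=
  qfact q N / (qfact q s * qfact q (N - s)).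

Section QLoop.
Variables (R : realType) (n m : nat) (A : 'M[int]_n) (d : 'I_n -> nat)
  (cor : 'M[R[i]]_(n, m)) (rts : 'M[R[i]]_(m, n)) (q : R[i]) (qpow : R[i] -> R[i])
  (W : lmodType R[i]) (Kact : 'rV[R[i]]_m -> W -> W)
  (Psi : bool -> 'I_n -> nat -> W -> W) (X : bool -> 'I_n -> int -> W -> W).

Definition qi (i : 'I_n) : R[i] := q ^+ d i.

Definition PsiZ (e : bool) (i : 'I_n) (k : int) : W -> W :=
  if e then (if 0 <= k then Psi true i `|k|%N else fun _ => 0)
  else (if k <= 0 then Psi false i `|k|%N else fun _ => 0).

Definition QL_module : Prop :=
  ((forall h, lin (Kact h)) /\ (forall e i r, lin (Psi e i r)) /\
      (forall b i k, lin (X b i k))) /\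
  (
      (forall i v, Psi true i 0 v = Kact ((d i)%:R *: row i cor) v /\
                   Psi false i 0 v = Kact (- (d i)%:R *: row i cor) v)) /\
  (
      (forall e e' i j r s v, comm (Psi e i r) (Psi e' j s) v = 0) /\
      (forall h e i r v, comm (Kact h) (Psi e i r) v = 0) /\
      (forall h h' v, Kact h (Kact h' v) = Kact (h + h') v) /\
      (forall v, Kact 0 v = v)) /\
  (
      (forall h b i k v,
         Kact h (X b i k (Kact (- h) v)) = qpow (sgn R b * alpha rts i h) *: X b i k v)) /\
  (
      (forall e b i j (k l : int) v,
         PsiZ e i (k + 1) (X b j l v) - (qi i ^ (sgnz b * A i j)) *: X b j l (PsiZ e i (k + 1) v)
         = (qi i ^ (sgnz b * A i j)) *: PsiZ e i k (X b j (l + 1) v) - X b j (l + 1) (PsiZ e i k v))) /\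
  (
      (forall b i j (k l : int) v,
         X b i (k + 1) (X b j l v) - (qi i ^ (sgnz b * A i j)) *: X b j l (X b i (k + 1) v)
         = (qi i ^ (sgnz b * A i j)) *: X b i k (X b j (l + 1) v) - X b j (l + 1) (X b i k v))) /\
  (
      (forall i j (k l : int) v,
         comm (X true i k) (X false j l) v
         = if i == j then (qi i - (qi i)^-1)^-1 *: (PsiZ true i (k + l) v - PsiZ false i (k + l) v)
           else 0)) /\
  (
      (forall b i j, i != j ->
         forall (k : 'I_`|1 - A i j|%N -> int) (l : int) (v : W),
         \sum_(sigma : 'S_`|1 - A i j|%N) \sum_(s < `|1 - A i j|%N.+1)
            ((-1) ^+ s * qbinom (qi i) `|1 - A i j|%N s) *:
              prodop (let ys := [seq X b i (k (sigma t)) | t <- enum 'I_`|1 - A i j|%N] in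
                      take s ys ++ X b j l :: drop s ys) v
         = 0)).

Definition Kwt (lam : 'rV[R[i]]_m -> R[i]) (v : W) : Prop :=
  forall h, Kact h v = lam h *: v.

Definition K_semisimple_findim : Prop :=
  (forall v : W, exists (N : nat) (lams : 'I_N -> 'rV[R[i]]_m -> R[i]) (vs : 'I_N -> W),
      v = \sum_(k < N) vs k /\ forall k, Kwt (lams k) (vs k))
  /\ (forall lam, fin_dim (Kwt lam)).

(* the weight mu + b alpha_i, multiplicatively: h |-> lam(h) q^{+/- alpha_i(h)} *)
Definition shiftwt (lam : 'rV[R[i]]_m -> R[i]) (b : bool) (i : 'I_n) :
  'rV[R[i]]_m -> R[i] := fun h => lam h * qpow (sgn R b * alpha rts i h).

(* X_i^b(z)^- = - sum_{k<0} X_{i,k} z^{-k}, as coefficients of z^r, r >= 0 *)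
Definition Xminus (b : bool) (i : 'I_n) : nat -> W -> W :=
  fun r => if r is _.+1 then (fun v => - X b i (- (r%:Z)) v) else (fun _ => 0).

End QLoop.

(* On a weight space the relation (Y3), resp. (QL3), taken at j = i says that consecutive
   modes are related by x_{i,r+1} = c [t_{i,1}, x_{i,r}], resp. X_{i,k+1} = c [H_{i,1}, X_{i,k}]
   and X_{i,k} = c' [H_{i,-1}, X_{i,k+1}], with t_{i,1} and H_{i,+-1} preserving weight spaces;
   solving these recursions gives the closed formulas.  Restricted to a weight space, the modes
   form a sequence of linear maps between two finite-dimensional spaces, so some nonzero
   polynomial p yields a relation sum_k p_k x_{i,k} = 0 there.  Taking commutators with the
   weight-preserving operator shifts it to sum_k p_k x_{i,k+l} = 0 for every l, i.e. p(u) x_i(u)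
   is a polynomial; in the loop case l ranges over all integers, so the same p clears the
   denominators at infinity and at zero.  Finally xi_i(u) and Psi_i(z) are commutators of
   x^+_i(u), X^+_i(z) with a fixed operator by (Y5), (QL5). *)

From mathcomp Require Import all_boot all_order all_algebra all_fingroup.
From mathcomp Require Import reals complex.
From Stdlib Require Import Classical.
From mathcomp Require Import zify ring.
Set Implicit Arguments.
Unset Strict Implicit.
Unset Printing Implicit Defensive.
Import Order.TTheory GRing.Theory Num.Theory.
Local Open Scope ring_scope.

Section LinearOperators.
Variables (R : realType) (V : lmodType R[i]).
Local Notation F := R[i].
Implicit Types (f g : V -> V) (u v : V).

Lemma lin0 f : lin f -> f 0 = 0.
Proof.
move=> hf; have := hf 1 0 0; rewrite !scale1r addr0 => e.
by apply: (@addrI _ (f 0)); rewrite addr0 -e.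
Qed.

Lemma linD f u (w : V) : lin f -> f (u + w) = f u + f w.
Proof. by move=> hf; rewrite -{1}(scale1r u) hf scale1r. Qed.

Lemma linZ f c u : lin f -> f (c *: u) = c *: f u.
Proof. by move=> hf; rewrite -[c *: u]addr0 hf lin0 // addr0. Qed.

Lemma linN f u : lin f -> f (- u) = - f u.
Proof. by move=> hf; rewrite -scaleN1r linZ // scaleN1r. Qed.

Lemma linB f u (w : V) : lin f -> f (u - w) = f u - f w.
Proof. by move=> hf; rewrite linD // linN. Qed.

Lemma lin_sum f (I : Type) (r : seq I) (P : pred I) (G : I -> V) :
  lin f -> f (\sum_(j <- r | P j) G j) = \sum_(j <- r | P j) f (G j).
Proof. by move=> hf; apply: (big_morph f (fun u w => linD u w hf) (lin0 hf)). Qed.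

Lemma lin_sub f g : lin f -> lin g -> lin (fun v => f v - g v).
Proof. by move=> hf hg c u w; rewrite hf hg scalerBr opprD addrACA. Qed.

Lemma lin_scale (k : F) f : lin f -> lin (fun v => k *: f v).
Proof. by move=> hf c u w; rewrite hf scalerDr !scalerA mulrC. Qed.

Lemma lin_comp f g : lin f -> lin g -> lin (fun v => f (g v)).
Proof. by move=> hf hg c u w; rewrite hg hf. Qed.

Lemma lin_opp f : lin f -> lin (fun v => - f v).
Proof. by move=> hf c u w; rewrite hf opprD scalerN. Qed.

Lemma ad_recurrenceE (a : nat -> V -> V) (H : V -> V) (c : F) :
  lin H -> (forall s v, a s.+1 v = c *: comm H (a s) v) ->
  forall r v, a r v = c ^+ r *: iter r (comm H) (a 0%N) v.
Proof.
move=> hH ha; elim=> [|r IH] v; first by rewrite expr0 scale1r.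
by rewrite ha /comm !IH (linZ _ _ hH) -scalerBr scalerA -exprS.
Qed.

Lemma sum_comm_l (p : {poly F}) (a : nat -> V -> V) g v : lin g ->
  \sum_(k < size p) p`_k *: comm g (a k) v
  = g (\sum_(k < size p) p`_k *: a k v) - \sum_(k < size p) p`_k *: a k (g v).
Proof.
move=> hg; rewrite (lin_sum _ _ _ hg) -sumrB; apply: eq_bigr => k _.
by rewrite /comm (linZ _ _ hg) scalerBr.
Qed.

Lemma sum_comm_r (p : {poly F}) (a : nat -> V -> V) g v : lin g ->
  \sum_(k < size p) p`_k *: comm (a k) g v
  = \sum_(k < size p) p`_k *: a k (g v) - g (\sum_(k < size p) p`_k *: a k v).
Proof.
move=> hg; rewrite (lin_sum _ _ _ hg) -sumrB; apply: eq_bigr => k _.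
by rewrite /comm (linZ _ _ hg) scalerBr.
Qed.

Lemma comm_sub_scalel f g h (k : F) v : lin h ->
  comm (fun w => f w - k *: g w) h v = comm f h v - k *: comm g h v.
Proof.
move=> hh; rewrite /comm (linB _ _ hh) (linZ _ _ hh) scalerBr.
by rewrite !opprB addrACA [RHS]addrACA [X in _ + X = _]addrC.
Qed.

(* The weight-space predicates hwt and Kwt are instances of eigen up to conversion. *)
Definition eigen (T : Type) (act : T -> V -> V) (f : T -> F) v : Prop :=
  forall h, act h v = f h *: v.

Section Eigen.
Variables (T : Type) (act : T -> V -> V) (f : T -> F).

Lemma eigen_comm g v : lin g -> (forall h w, comm (act h) g w = 0) ->
  eigen act f v -> eigen act f (g v).
Proof.
move=> hg hc hv h; have /eqP := hc h v.
by rewrite subr_eq0 => /eqP ->; rewrite hv (linZ _ _ hg).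
Qed.

Lemma eigen_shift g (s : T -> F) v :
  lin g -> (forall h w, comm (act h) g w = s h *: g w) ->
  eigen act f v -> eigen act (fun h => f h + s h) (g v).
Proof.
move=> hg hc hv h; have /eqP := hc h v.
by rewrite subr_eq => /eqP ->; rewrite hv (linZ _ _ hg) scalerDl addrC.
Qed.

Lemma eigen_twist g (s : T -> F) v :
  lin g -> (forall h w, act h (g w) = s h *: g (act h w)) ->
  eigen act f v -> eigen act (fun h => f h * s h) (g v).
Proof. by move=> hg hc hv h; rewrite hc hv (linZ _ _ hg) scalerA mulrC. Qed.

End Eigen.

End LinearOperators.

Section FiniteSpans.
Variables (R : realType) (V : lmodType R[i]).
Local Notation F := R[i].
Implicit Types (v : V).

Definition in_span (b : seq V) v := exists c : nat -> F, v = \sum_(k < size b) c k *: b`_k.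

Definition spanned_by (b : seq V) (S : V -> Prop) := forall v, S v -> in_span b v.

Lemma fin_dim_spanned (S : V -> Prop) : fin_dim S -> exists b, spanned_by b S.
Proof.
case=> b hb; exists b => v /hb [c ->].
by exists (fun k => if insub k is Some k' then c k' else 0); apply: eq_bigr => k _; rewrite valK.
Qed.

Lemma in_span_catl (b1 b2 : seq V) v : in_span b1 v -> in_span (b1 ++ b2) v.
Proof.
case=> c ->; exists (fun k => if (k < size b1)%N then c k else 0).
rewrite size_cat big_split_ord /= [X in _ = _ + X]big1 ?addr0 => [|k _].
  by apply: eq_bigr => k _; rewrite /= ltn_ord nth_cat ltn_ord.
by rewrite /= ltnNge leq_addr scale0r.
Qed.

Lemma in_span_catr (b1 b2 : seq V) v : in_span b2 v -> in_span (b1 ++ b2) v.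
Proof.
case=> c ->; exists (fun k => if (k < size b1)%N then 0 else c (k - size b1)%N).
rewrite size_cat big_split_ord /= [X in _ = X + _]big1 ?add0r => [|k _].
  by apply: eq_bigr => k _; rewrite /= ltnNge leq_addr nth_cat ltnNge leq_addr addKn.
by rewrite /= ltn_ord scale0r.
Qed.

Lemma spanned_by_cat (b1 b2 : seq V) (S1 S2 : V -> Prop) :
  spanned_by b1 S1 -> spanned_by b2 S2 -> spanned_by (b1 ++ b2) (fun v => S1 v \/ S2 v).
Proof. by move=> h1 h2 v [/h1/in_span_catl | /h2/in_span_catr]. Qed.

Lemma rows_dependent (T : finType) (J : nat) (c : 'I_J -> T -> F) :
  (#|T| < J)%N ->
  exists y : 'I_J -> F, (exists j, y j != 0) /\ forall t, \sum_j y j * c j t = 0.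
Proof.
move=> hJ; pose C : 'M[F]_(J, #|T|) := \matrix_(j, k) c j (enum_val k).
have : kermx C != 0.
  by rewrite -mxrank_eq0 mxrank_ker -lt0n subn_gt0 (leq_ltn_trans (rank_leq_col C)).
case/matrix0Pn => k [j0 hk]; exists (fun j => kermx C k j); split; first by exists j0.
move=> t; have /matrixP/(_ k (enum_rank t)) := mulmx_ker C.
rewrite !mxE => e; rewrite -[RHS]e; apply: eq_bigr => j _; congr (_ * _).
by rewrite /C mxE enum_rankK.
Qed.

Lemma span_families_dependent (J s : nat) (b : seq V) (u : nat -> nat -> V) :
  (s * size b < J)%N -> (forall (j : 'I_J) (t : 'I_s), in_span b (u j t)) ->
  exists y : nat -> F, (exists2 j, (j < J)%N & y j != 0) /\
    forall t, (t < s)%N -> \sum_(j < J) y j *: u j t = 0.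
Proof.
move=> hJ hu.
have [co hco] := fin_all_exists (fun jt : 'I_J * 'I_s => hu jt.1 jt.2).
have [|y [[j0 hj0] hy]] :=
  rows_dependent (fun j (tk : 'I_s * 'I_(size b)) => co (j, tk.1) tk.2).
  by rewrite card_prod !card_ord.
exists (fun j => if insub j is Some j' then y j' else 0); split.
  by exists j0; rewrite ?ltn_ord // valK.
move=> t ht; under eq_bigr => j _ do rewrite valK (hco (j, Ordinal ht)) scaler_sumr.
rewrite exchange_big big1 // => k _ /=.
rewrite -[RHS](scale0r b`_k) -(hy (Ordinal ht, k)) scaler_suml.
by apply: eq_bigr => j _; rewrite scalerA.
Qed.

Definition independent (w : seq V) :=
  forall c : nat -> F, \sum_(k < size w) c k *: w`_k = 0 ->
    forall k, (k < size w)%N -> c k = 0.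

Lemma independent_size_le (w b : seq V) : independent w ->
  (forall t, (t < size w)%N -> in_span b w`_t) -> (size w <= size b)%N.
Proof.
move=> hw hb; rewrite leqNgt; apply/negP => hlt.
have [|y [[j hj hyj] hy]] := @span_families_dependent (size w) 1 b (fun j _ => w`_j) _
  (fun j _ => hb j (ltn_ord j)); first by rewrite mul1n.
by move/eqP: hyj; apply; apply: hw (hy 0%N isT) _ hj.
Qed.

Lemma independent_rcons (w : seq V) v : independent w -> ~ in_span w v -> independent (rcons w v).
Proof.
move=> hw hv c; rewrite size_rcons big_ord_recr /= nth_rcons ltnn eqxx.
under eq_bigr => k _ do rewrite nth_rcons ltn_ord.
move=> hsum; have cv0 : c (size w) = 0.
  apply: NNPP => /eqP cv; apply: hv; exists (fun k => - (c k / c (size w))).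
  have -> : v = (c (size w))^-1 *: (c (size w) *: v) by rewrite scalerA mulVf ?scale1r.
  move/eqP: hsum; rewrite addrC addr_eq0 => /eqP ->.
  rewrite scalerN scaler_sumr -sumrN; apply: eq_bigr => k _.
  by rewrite scalerA -scaleNr mulrC.
move: hsum; rewrite cv0 scale0r addr0 => hsum k.
by rewrite ltnS leq_eqVlt => /orP [/eqP -> // | /(hw c hsum)].
Qed.

Lemma fin_dim_spanned_within (S : V -> Prop) : fin_dim S ->
  exists w, (forall t, (t < size w)%N -> S w`_t) /\ spanned_by w S.
Proof.
case/fin_dim_spanned => b hb; apply: NNPP => hnot.
(* Otherwise independent families inside S could be extended forever, but they have at most
   size b elements. *)
have grow n : exists w, [/\ size w = n, forall t, (t < size w)%N -> S w`_t & independent w].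
  elim: n => [|n [w [<- hwS hw]]].
    by exists [::]; split=> // [t|c _ k]; rewrite ltn0.
  have [v [Sv hv]] : exists v, S v /\ ~ in_span w v.
    apply: NNPP => hall; apply: hnot; exists w; split=> // v Sv.
    by apply: NNPP => hv; apply: hall; exists v.
  exists (rcons w v); split; [by rewrite size_rcons | | exact: independent_rcons].
  move=> t; rewrite size_rcons ltnS leq_eqVlt nth_rcons => /orP [/eqP ->|ht].
    by rewrite ltnn eqxx.
  by rewrite ht; apply: hwS.
have [w [hsz hwS hw]] := grow (size b).+1.
by have := independent_size_le hw (fun t ht => hb _ (hwS t ht)); rewrite hsz ltnn.
Qed.

End FiniteSpans.

Section AnnihilatingPolynomials.
Variables (R : realType) (V : lmodType R[i]).
Local Notation F := R[i].
Implicit Types (v : V).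

Definition annihilates (S : V -> Prop) (p : {poly F}) (a : nat -> V -> V) :=
  forall v, S v -> \sum_(k < size p) p`_k *: a k v = 0.

Lemma sum_coef_widen (p : {poly F}) N (G : nat -> V) : (size p <= N)%N ->
  \sum_(k < size p) p`_k *: G k = \sum_(k < N) p`_k *: G k.
Proof.
move=> hN; rewrite (big_ord_widen N (fun k => p`_k *: G k) hN) big_mkcond.
apply: eq_bigr => k _; case: ltnP => // hk.
by rewrite nth_default // scale0r.
Qed.

Lemma lin_family_annihilated (S T : V -> Prop) (w b : seq V) (a : nat -> V -> V) :
  (forall j, lin (a j)) -> (forall t, (t < size w)%N -> S w`_t) -> spanned_by w S ->
  spanned_by b T -> (forall j v, S v -> T (a j v)) ->
  exists2 p : {poly F}, p != 0 & annihilates S p a.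
Proof.
move=> hl hwS hw hb haT; set J := (size w * size b).+1.
(* On S, a_j is determined by the coordinates of the a_j w_t in b, so J of them are dependent. *)
have [y [[j0 hj0 hy0] hy]] := @span_families_dependent _ _ J (size w) b
  (fun j t => a j w`_t) (ltnSn _) (fun j t => hb _ (haT j _ (hwS t (ltn_ord t)))).
exists (\poly_(j < J) y j).
  apply: contraNneq hy0 => /(congr1 (fun p : {poly F} => p`_j0)).
  by rewrite coef_poly hj0 coef0 => ->.
move=> v /hw [e ->]; rewrite (sum_coef_widen (fun k => a k _) (size_poly _ _)).
under eq_bigr => j _ do rewrite coef_poly ltn_ord (lin_sum _ _ _ (hl j)) scaler_sumr.
rewrite exchange_big big1 //= => t _.
transitivity (e t *: \sum_(j < J) y j *: a j w`_t); last by rewrite hy ?scaler0.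
rewrite scaler_sumr.
by apply: eq_bigr => j _; rewrite (linZ _ _ (hl j)) !scalerA mulrC.
Qed.

Lemma annihilating_poly_union (S1 S2 T1 T2 : V -> Prop) (a : nat -> V -> V) :
  fin_dim S1 -> fin_dim S2 -> fin_dim T1 -> fin_dim T2 -> (forall j, lin (a j)) ->
  (forall j v, S1 v -> T1 (a j v)) -> (forall j v, S2 v -> T2 (a j v)) ->
  exists2 p : {poly F}, p != 0 & annihilates (fun v => S1 v \/ S2 v) p a.
Proof.
move=> /fin_dim_spanned_within [w1 [hw1 sw1]] /fin_dim_spanned_within [w2 [hw2 sw2]].
move=> /fin_dim_spanned [b1 hb1] /fin_dim_spanned [b2 hb2] hl h1 h2.
apply: (lin_family_annihilated hl _ (spanned_by_cat sw1 sw2) (spanned_by_cat hb1 hb2)).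
  move=> t; rewrite size_cat nth_cat; case: (ltnP t (size w1)) => ht1 ht.
    by left; apply: hw1.
  by right; apply: hw2; rewrite ltn_subLR.
by move=> j v [/h1 | /h2]; [left | right].
Qed.

Lemma annihilates_ad (S : V -> Prop) p (a b : nat -> V -> V) (H : V -> V) (c : F) :
  lin H -> (forall v, S v -> S (H v)) -> (forall k v, b k v = c *: comm H (a k) v) ->
  annihilates S p a -> annihilates S p b.
Proof.
move=> hH hS hb ha v Sv.
under eq_bigr => k _ do rewrite hb scalerA mulrC -scalerA.
by rewrite -scaler_sumr sum_comm_l // (ha v Sv) (ha _ (hS v Sv)) (lin0 hH) subrr scaler0.
Qed.

Lemma annihilates_shift (S : V -> Prop) p (a : nat -> V -> V) (H : V -> V) (c : F) :
  lin H -> (forall v, S v -> S (H v)) -> (forall j v, a j.+1 v = c *: comm H (a j) v) ->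
  annihilates S p a -> forall l, annihilates S p (fun k => a (k + l)%N).
Proof.
move=> hH hS ha h0; elim=> [|l IH].
  by move=> v Sv; under eq_bigr do rewrite addn0; exact: h0.
by apply: (annihilates_ad hH hS _ IH) => k v; rewrite addnS ha.
Qed.

Lemma annihilates_shiftz (S : V -> Prop) p (G : int -> V -> V) (H H' : V -> V) (c c' : F) :
  lin H -> lin H' -> (forall v, S v -> S (H v)) -> (forall v, S v -> S (H' v)) ->
  (forall l v, G (l + 1) v = c *: comm H (G l) v) ->
  (forall l v, G l v = c' *: comm H' (G (l + 1)) v) ->
  annihilates S p (fun k => G k%:Z) -> forall l, annihilates S p (fun k => G (k%:Z + l)).
Proof.
move=> hH hH' hS hS' hf hb h0.
have up n : annihilates S p (fun k => G (k%:Z + n%:Z)).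
  elim: n => [|n IH]; first by move=> v Sv; under eq_bigr do rewrite addr0; exact: h0.
  by apply: (annihilates_ad (c := c) hH hS _ IH) => k v; rewrite -hf; congr G; lia.
have down n : annihilates S p (fun k => G (k%:Z - n%:Z)).
  elim: n => [|n IH]; first by move=> v Sv; under eq_bigr do rewrite subr0; exact: h0.
  apply: (annihilates_ad (c := c') hH' hS' _ IH) => k v.
  by rewrite hb; congr (_ *: comm _ (G _) _); lia.
by case=> n; [apply: up | rewrite NegzE; apply: down].
Qed.

Lemma rational_at_infty_of (S : V -> Prop) (f g : nat -> V -> V) (c : F) (p : {poly F}) :
  p != 0 -> (forall r v, f r.+1 v = c *: g r v) ->
  (forall l, annihilates S p (fun k => g (k + l)%N)) -> rational_at_infty S f.
Proof.
move=> p0 hf hg; exists p; split=> // -[|N] // v _ Sv.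
transitivity (c *: \sum_(k < size p) p`_k *: g (k + N)%N v); last by rewrite hg ?scaler0.
rewrite scaler_sumr; apply: eq_bigr => k _.
by rewrite addSn hf scalerA mulrC -scalerA addnC.
Qed.

Lemma rational_infty_zero_of (S : V -> Prop) (fp fm : nat -> V -> V) (G : int -> V -> V)
    (p : {poly F}) : p != 0 ->
  (forall z v, (if 0 <= z then fp `|z|%N v else 0) - (if z <= 0 then fm `|z|%N v else 0)
               = G z v) ->
  (forall l, annihilates S p (fun k => G (k%:Z + l))) -> rational_infty_zero S fp fm.
Proof.
move=> p0 hG hann; exists p; split=> // M v Sv; apply/eqP; rewrite -subr_eq0.
rewrite big_mkcond [X in _ - X]big_mkcond -sumrB /=; apply/eqP.
rewrite -[RHS](hann (- M) v Sv).
apply: eq_bigr => k _; rewrite -hG scalerBr -[M <= _]subr_ge0 -[_ <= M]subr_le0.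
by rewrite -[`|M - _|%N]abszN opprB; case: ifP; case: ifP; rewrite ?scaler0.
Qed.

End AnnihilatingPolynomials.

Lemma alpha_scale_row (R : realType) (n m : nat) (A : 'M[int]_n) (cor : 'M[R[i]]_(n, m))
    (rts : 'M[R[i]]_(m, n)) (i j : 'I_n) (c : R[i]) :
  cor *m rts = map_mx (fun z : int => z%:~R : R[i]) A ->
  alpha rts j (c *: row i cor) = c * (A i j)%:~R.
Proof. by move=> hcr; rewrite /alpha -scalemxAl mxE -row_mul mxE hcr mxE. Qed.

Lemma alpha_col (R : realType) (n m : nat) (rts : 'M[R[i]]_(m, n)) (i : 'I_n) h :
  (h *m col i rts) 0 0 = alpha rts i h.
Proof. by rewrite /alpha !mxE; apply: eq_bigr => k _; rewrite mxE. Qed.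

Definition yangian_t (R : realType) (V : lmodType R[i]) (hbar : R[i]) (xi : nat -> V -> V) :
  V -> V := fun v => xi 1%N v - (hbar / 2) *: xi 0%N (xi 0%N v).

Section YangianRationality.
Variables (R : realType) (n m : nat) (A : 'M[int]_n) (d : 'I_n -> nat)
  (cor : 'M[R[i]]_(n, m)) (rts : 'M[R[i]]_(m, n)) (hbar : R[i])
  (V : lmodType R[i]) (hact : 'rV[R[i]]_m -> V -> V)
  (xi : 'I_n -> nat -> V -> V) (x : bool -> 'I_n -> nat -> V -> V) (i : 'I_n).
Hypotheses (HY : Yangian_module A d cor rts hbar hact xi x)
  (hfd : forall mu, fin_dim (hwt hact mu))
  (hcr : cor *m rts = map_mx (fun z : int => z%:~R : R[i]) A)
  (Aii : A i i = 2) (di_gt0 : (0 < d i)%N).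
Local Notation t := (yangian_t hbar (xi i)).

Lemma lin_x b r : lin (x b i r). Proof. by case: HY => [[_ [_ +]] _]. Qed.

Lemma lin_xi r : lin (xi i r). Proof. by case: HY => [[_ [+ _]] _]. Qed.

Lemma lin_hact h : lin (hact h). Proof. by case: HY => [[+ _] _]. Qed.

Lemma xi0E v : xi i 0 v = hact ((d i)%:R *: row i cor) v.
Proof. by case: HY => _ [_ [+ _]]. Qed.

Lemma comm_hact_xi h r v : comm (hact h) (xi i r) v = 0.
Proof. by case: HY => _ [_ [_ [[_ [+ _]] _]]]. Qed.

Lemma comm_hact_x h b r v :
  comm (hact h) (x b i r) v = (sgn R b * alpha rts i h) *: x b i r v.
Proof. by case: HY => _ [_ [_ [_ [+ _]]]]. Qed.

Lemma xi_x_exchange b r s v :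
  comm (xi i r.+1) (x b i s) v - comm (xi i r) (x b i s.+1) v
  = (sgn R b * hbar * (d i)%:R * (A i i)%:~R / 2) *: acomm (xi i r) (x b i s) v.
Proof. by case: HY => _ [_ [_ [_ [_ [+ _]]]]]. Qed.

Lemma xiE k v : xi i k v = comm (x true i k) (x false i 0) v.
Proof.
by case: HY => _ [_ [_ [_ [_ [_ [_ [/(_ i i k 0%N v) + _]]]]]]]; rewrite eqxx addn0.
Qed.

Lemma xi_weight r mu v : hwt hact mu v -> hwt hact mu (xi i r v).
Proof. exact: eigen_comm (lin_xi r) (fun h => comm_hact_xi h r). Qed.

Lemma x_weight b r mu v : hwt hact mu v -> hwt hact (mu + sgn R b *: col i rts) (x b i r v).
Proof.
move=> hv h; rewrite (eigen_shift (lin_x b r) (fun h => comm_hact_x h b r) hv h).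
by rewrite mulmxDr -scalemxAr -alpha_col !mxE.
Qed.

Lemma lin_t : lin t.
Proof. exact: lin_sub (lin_xi 1) (lin_scale _ (lin_comp (lin_xi 0) (lin_xi 0))). Qed.

Lemma t_weight mu v : hwt hact mu v -> hwt hact mu (t v).
Proof.
move=> hv h; rewrite (linB _ _ (lin_hact h)) (linZ _ _ (lin_hact h)).
by rewrite (xi_weight 1 hv) (xi_weight 0 (xi_weight 0 hv)) scalerBr !scalerA mulrC.
Qed.

Lemma comm_xi0_x b s v : comm (xi i 0) (x b i s) v = (sgn R b * (2 * (d i)%:R)) *: x b i s v.
Proof.
rewrite /comm !xi0E; have := comm_hact_x ((d i)%:R *: row i cor) b s v.
by rewrite /comm (alpha_scale_row _ _ _ hcr) Aii => ->; rewrite [2 * _]mulrC.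
Qed.

Lemma comm_xi0_sq_x b s v :
  comm (fun w => xi i 0 (xi i 0 w)) (x b i s) v
  = (sgn R b * (2 * (d i)%:R)) *: acomm (xi i 0) (x b i s) v.
Proof.
have E w : xi i 0 (x b i s w) = x b i s (xi i 0 w) + (sgn R b * (2 * (d i)%:R)) *: x b i s w.
  by have /eqP := comm_xi0_x b s w; rewrite subr_eq addrC => /eqP.
rewrite /comm /acomm [xi i 0 (x b i s v)]E (linD _ _ (lin_xi 0)) (linZ _ _ (lin_xi 0)) E.
rewrite [xi i 0 (x b i s v)]E -!addrA addrC -addrA subrK.
by rewrite -scalerDr (addrC (_ *: x b i s v)).
Qed.

Lemma comm_t_x b s v :
  comm t (x b i s) v = (sgn R b * (2 * (d i)%:R)) *: x b i s.+1 v.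
Proof.
(* (Y3) at r = 0: the xi_{i,0}^2 term of t_{i,1} absorbs its right-hand side. *)
have Y3 := xi_x_exchange b 0 s v; rewrite comm_xi0_x in Y3.
move/eqP: Y3; rewrite subr_eq => /eqP Y3.
rewrite /yangian_t comm_sub_scalel; last exact: lin_x.
rewrite Y3 comm_xi0_sq_x scalerA.
have -> : sgn R b * hbar * (d i)%:R * (A i i)%:~R / 2
          = hbar / 2 * (sgn R b * (2 * (d i)%:R)) by rewrite Aii; ring.
by rewrite addrAC subrr add0r.
Qed.

Lemma x_succ b s v : x b i s.+1 v = (sgn R b / (2 * (d i)%:R)) *: comm t (x b i s) v.
Proof.
have di0 : (d i)%:R != 0 :> R[i] by rewrite pnatr_eq0 -lt0n.
rewrite comm_t_x scalerA -[LHS]scale1r; congr (_ *: _).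
by case: b; rewrite /sgn; field.
Qed.

Lemma x_iterE b r v :
  x b i r v = (sgn R b / (2 * (d i)%:R)) ^+ r *: iter r (comm t) (x b i 0) v.
Proof. exact: ad_recurrenceE lin_t (x_succ b) r v. Qed.

Lemma x_shifts_annihilated b mu1 mu2 : exists2 p : {poly R[i]}, p != 0 &
  forall l, annihilates (fun v => hwt hact mu1 v \/ hwt hact mu2 v) p (fun k => x b i (k + l)%N).
Proof.
have [p p0 hp] := annihilating_poly_union (hfd mu1) (hfd mu2) (hfd _) (hfd _) (lin_x b)
  (fun r v hv => x_weight b r hv) (fun r v hv => x_weight b r hv).
exists p => //; apply: (annihilates_shift lin_t _ (x_succ b) hp).
by move=> v [/t_weight | /t_weight]; [left | right].
Qed.

Lemma x_rational b mu : rational_at_infty (hwt hact mu) (useries hbar (fun _ => 0) (x b i)).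
Proof.
have [p p0 hp] := x_shifts_annihilated b mu mu.
by apply: (rational_at_infty_of p0 (fun r v => erefl)) => l v hv; apply: hp; left.
Qed.

Lemma xi_rational mu : rational_at_infty (hwt hact mu) (useries hbar id (xi i)).
Proof.
have [p p0 hp] := x_shifts_annihilated true mu (mu + sgn R false *: col i rts).
apply: (rational_at_infty_of p0 (fun r v => erefl)) => l v hv.
under eq_bigr do rewrite xiE.
rewrite (@sum_comm_r _ _ p (fun k => x true i (k + l)%N)); last exact: lin_x.
rewrite (hp l _ (or_introl hv)) (hp l _ (or_intror (x_weight false 0 hv))).
by rewrite (lin0 (lin_x _ _)) subrr.
Qed.

Lemma useries_xE b r v : useries hbar (fun _ => 0) (x b i) r.+1 v
  = (hbar * (sgn R b / (2 * (d i)%:R)) ^+ r) *: iter r (comm t) (x b i 0) v.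
Proof. by rewrite /= x_iterE scalerA. Qed.

Lemma useries_xiE k v : useries hbar id (xi i) k v
  = (if k == 0%N then v else 0) + comm (useries hbar (fun _ => 0) (x true i) k) (x false i 0) v.
Proof.
case: k => [|k] /=; first by rewrite /comm (lin0 (lin_x _ _)) subrr addr0.
by rewrite add0r /comm (linZ _ _ (lin_x _ _)) -scalerBr xiE.
Qed.

End YangianRationality.

Section AdditiveToMultiplicative.
Variables (F : fieldType) (q : F) (qpow : F -> F).
Hypotheses (q0 : q != 0) (qpow1 : qpow 1 = q)
  (qpowD : forall a b, qpow (a + b) = qpow a * qpow b).

Lemma qpow0 : qpow 0 = 1.
Proof. by apply: (mulfI q0); rewrite mulr1 -{1 2}qpow1 -qpowD addr0. Qed.

Lemma qpowN a : qpow (- a) = (qpow a)^-1.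
Proof.
have qaN : qpow a * qpow (- a) = 1 by rewrite -qpowD subrr qpow0.
have qa0 : qpow a != 0 by apply: contra_eq_neq qaN => ->; rewrite mul0r eq_sym oner_neq0.
by rewrite -[qpow (- a)]mul1r -(mulVf qa0) -mulrA qaN mulr1.
Qed.

Lemma qpow_nat (k : nat) : qpow k%:R = q ^+ k.
Proof. by elim: k => [|k IH]; rewrite ?qpow0 // -natr1 qpowD IH qpow1 exprSr. Qed.

Lemma qpow_int (k : int) : qpow k%:~R = q ^ k.
Proof. by case: k => k; rewrite ?NegzE ?mulrNz ?qpowN qpow_nat. Qed.

End AdditiveToMultiplicative.

Lemma subr_invr_neq0 (F : fieldType) (y : F) : y != 0 -> y ^+ 2 != 1 -> y - y^-1 != 0.
Proof.
move=> y0; apply: contra; rewrite subr_eq0 => /eqP yV.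
by rewrite expr2 {2}yV mulfV.
Qed.

Lemma addr_invr_neq0 (F : fieldType) (y : F) : y != 0 -> y ^+ 4 != 1 -> y + y^-1 != 0.
Proof.
move=> y0; apply: contra; rewrite addr_eq0 => /eqP yV.
have y2 : y ^+ 2 = -1 by rewrite expr2 {2}yV mulrN mulfV.
by rewrite (_ : 4 = 2 * 2)%N // exprM y2 sqrrN expr1n.
Qed.

Section QLoopRationality.
Variables (R : realType) (n m : nat) (A : 'M[int]_n) (d : 'I_n -> nat)
  (cor : 'M[R[i]]_(n, m)) (rts : 'M[R[i]]_(m, n)) (q : R[i]) (qpow : R[i] -> R[i])
  (W : lmodType R[i]) (Kact : 'rV[R[i]]_m -> W -> W)
  (Psi : bool -> 'I_n -> nat -> W -> W) (X : bool -> 'I_n -> int -> W -> W) (i : 'I_n).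
Hypotheses (HQ : QL_module A d cor rts q qpow Kact Psi X)
  (hfd : forall lam, fin_dim (Kwt Kact lam))
  (hcr : cor *m rts = map_mx (fun z : int => z%:~R : R[i]) A)
  (Aii : A i i = 2) (di_gt0 : (0 < d i)%N)
  (q0 : q != 0) (q_not_root : forall k : nat, (0 < k)%N -> q ^+ k != 1)
  (qpow1 : qpow 1 = q) (qpowD : forall a b : R[i], qpow (a + b) = qpow a * qpow b).
Local Notation qq := (qi d q i).
Local Notation kap b := (qq ^ (sgnz b * A i i)).
Local Notation H1 := (fun v : W => (qq - qq^-1)^-1 *: Psi false i 0%N (Psi true i 1%N v)).
Local Notation Hm1 :=
  (fun v : W => - ((qq - qq^-1)^-1 *: Psi true i 0%N (Psi false i 1%N v))).

Lemma lin_Kact h : lin (Kact h). Proof. by case: HQ => [[+ _] _]. Qed.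

Lemma lin_Psi e r : lin (Psi e i r). Proof. by case: HQ => [[_ [+ _]] _]. Qed.

Lemma lin_X b k : lin (X b i k). Proof. by case: HQ => [[_ [_ +]] _]. Qed.

Lemma Psi0E e v :
  Psi e i 0%N v = Kact ((if e then (d i)%:R else - (d i)%:R) *: row i cor) v.
Proof. by case: HQ => _ [/(_ i v) [? ?] _]; case: e. Qed.

Lemma comm_Kact_Psi h e r v : comm (Kact h) (Psi e i r) v = 0.
Proof. by case: HQ => _ [_ [[_ [+ _]] _]]. Qed.

Lemma KactD h h' v : Kact h (Kact h' v) = Kact (h + h') v.
Proof. by case: HQ => _ [_ [[_ [_ [+ _]]] _]]. Qed.

Lemma Kact0 v : Kact 0 v = v.
Proof. by case: HQ => _ [_ [[_ [_ [_ +]]] _]]. Qed.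

Lemma Kact_X h b k w :
  Kact h (X b i k w) = qpow (sgn R b * alpha rts i h) *: X b i k (Kact h w).
Proof.
case: HQ => _ [_ [_ [/(_ h b i k (Kact h w)) + _]]].
by rewrite KactD addNr Kact0.
Qed.

Lemma Psi_X_exchange e b (k l : int) v :
  PsiZ Psi e i (k + 1) (X b i l v) - kap b *: X b i l (PsiZ Psi e i (k + 1) v)
  = kap b *: PsiZ Psi e i k (X b i (l + 1) v) - X b i (l + 1) (PsiZ Psi e i k v).
Proof. by case: HQ => _ [_ [_ [_ [+ _]]]]. Qed.

Lemma qi_neq0 : qq != 0.
Proof. by rewrite expf_neq0. Qed.

Lemma qi_sub_inv_neq0 : qq - qq^-1 != 0.
Proof. by rewrite subr_invr_neq0 ?qi_neq0 // -exprM q_not_root // muln_gt0 di_gt0. Qed.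

Lemma qi_add_inv_neq0 : qq + qq^-1 != 0.
Proof. by rewrite addr_invr_neq0 ?qi_neq0 // -exprM q_not_root // muln_gt0 di_gt0. Qed.

Lemma comm_X_Xminus0 (k : int) v :
  (qq - qq^-1) *: comm (X true i k) (X false i 0) v = PsiZ Psi true i k v - PsiZ Psi false i k v.
Proof.
case: HQ => _ [_ [_ [_ [_ [_ [/(_ i i k 0 v) + _]]]]]].
by rewrite eqxx addr0 => ->; rewrite scalerA mulfV ?qi_sub_inv_neq0 // scale1r.
Qed.

Lemma Psi_weight e r lam v : Kwt Kact lam v -> Kwt Kact lam (Psi e i r v).
Proof. exact: eigen_comm (lin_Psi e r) (fun h => comm_Kact_Psi h e r). Qed.

Lemma X_weight b k lam v :
  Kwt Kact lam v -> Kwt Kact (shiftwt rts qpow lam b i) (X b i k v).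
Proof. exact: eigen_twist (lin_X b k) (fun h => Kact_X h b k). Qed.

Lemma qpow_alpha_row (c : int) b :
  qpow (sgn R b * alpha rts i (c%:~R *: row i cor)) = q ^ (sgnz b * (c * A i i)).
Proof.
rewrite (alpha_scale_row _ _ _ hcr) -(qpow_int q0 qpow1 qpowD).
by congr qpow; case: b; rewrite /sgn /sgnz ?mul1r ?mulN1r ?rmorphN rmorphM.
Qed.

Lemma Psi0_X b k w : Psi true i 0%N (X b i k w) = kap b *: X b i k (Psi true i 0%N w).
Proof.
rewrite !Psi0E Kact_X -[(d i)%:R]/((d i)%:Z%:~R) qpow_alpha_row.
by rewrite /qi exprnP exprz_exp mulrCA.
Qed.

Lemma Psim0_X b k w : Psi false i 0%N (X b i k w) = (kap b)^-1 *: X b i k (Psi false i 0%N w).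
Proof.
rewrite !Psi0E /= Kact_X.
have -> : - (d i)%:R = (- (d i)%:Z)%:~R :> R[i] by rewrite intrN.
rewrite qpow_alpha_row.
by rewrite /qi invr_expz exprnP exprz_exp; congr (q ^ _ *: _); ring.
Qed.

Lemma Psi0_Psim0 w : Psi true i 0%N (Psi false i 0%N w) = w.
Proof. by rewrite !Psi0E KactD scaleNr addrN Kact0. Qed.

Lemma Psim0_Psi0 w : Psi false i 0%N (Psi true i 0%N w) = w.
Proof. by rewrite !Psi0E KactD scaleNr addNr Kact0. Qed.

Lemma kap_ratio b : (qq - qq^-1)^-1 * (kap b - (kap b)^-1) = sgn R b * (qq + qq^-1).
Proof.
have q0' := qi_neq0; have qm := qi_sub_inv_neq0.
have qm' : qq * qq - 1 != 0.
  apply: contraNneq qm => h.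
  have -> : qq - qq^-1 = (qq * qq - 1) / qq by field.
  by rewrite h mul0r.
by rewrite Aii; case: b; rewrite /sgn /sgnz ?mul1r ?mulN1r -?invr_expz ?invrK -exprnP;
  field; rewrite q0' qm'.
Qed.

Lemma comm_H1_X b l v : comm H1 (X b i l) v = (sgn R b * (qq + qq^-1)) *: X b i (l + 1) v.
Proof.
(* Multiplying (QL3) at k = 0 by Psi^-_{i,0} cancels the twists by Psi^+_{i,0}. *)
have E := Psi_X_exchange true b 0 l v; rewrite /PsiZ add0r ler01 lexx /= in E.
have := congr1 (Psi false i 0%N) E.
rewrite !(linB _ _ (lin_Psi _ _)) !(linZ _ _ (lin_Psi _ _)) !Psim0_X !Psim0_Psi0.
rewrite scalerA mulfV ?expfz_neq0 ?qi_neq0 // scale1r -scalerBl => e.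
by rewrite /comm (linZ _ _ (lin_X b l)) -scalerBr e scalerA kap_ratio.
Qed.

Lemma comm_Hm1_X b l v : comm Hm1 (X b i (l + 1)) v = (sgn R b * (qq + qq^-1)) *: X b i l v.
Proof.
have kap0 : kap b != 0 by rewrite expfz_neq0 ?qi_neq0.
have E := Psi_X_exchange false b (-1) l v; rewrite /PsiZ addNr lexx lerN10 /= in E.
have := congr1 (Psi true i 0%N) E.
rewrite !(linB _ _ (lin_Psi _ _)) !(linZ _ _ (lin_Psi _ _)) !Psi0_X !Psi0_Psim0.
rewrite scalerA -scalerBr => e.
have {}e : Psi true i 0%N (Psi false i 1%N (X b i (l + 1) v))
           - X b i (l + 1) (Psi true i 0%N (Psi false i 1%N v)) = ((kap b)^-1 - kap b) *: X b i l v.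
  by apply: (scalerI kap0); rewrite -e scalerA mulrBr mulfV // scalerBl scale1r.
rewrite /comm (linN _ (lin_X b _)) (linZ _ _ (lin_X b _)) opprK addrC -opprB -scalerBr e.
by rewrite scalerA -scaleNr -mulrN opprB kap_ratio.
Qed.

Lemma sgn_ratioK b : sgn R b / (qq + qq^-1) * (sgn R b * (qq + qq^-1)) = 1.
Proof.
rewrite mulrACA mulVf ?qi_add_inv_neq0 // mulr1.
by case: b; rewrite /sgn ?mulrNN mulr1.
Qed.

Lemma X_succ b l v : X b i (l + 1) v = (sgn R b / (qq + qq^-1)) *: comm H1 (X b i l) v.
Proof. by rewrite comm_H1_X scalerA sgn_ratioK scale1r. Qed.

Lemma X_pred b l v : X b i l v = (sgn R b / (qq + qq^-1)) *: comm Hm1 (X b i (l + 1)) v.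
Proof. by rewrite comm_Hm1_X scalerA sgn_ratioK scale1r. Qed.

Lemma lin_H1 : lin H1.
Proof. exact: lin_scale _ (lin_comp (lin_Psi false 0) (lin_Psi true 1)). Qed.

Lemma lin_Hm1 : lin Hm1.
Proof. exact: lin_opp (lin_scale _ (lin_comp (lin_Psi true 0) (lin_Psi false 1))). Qed.

Lemma H1_weight lam v : Kwt Kact lam v -> Kwt Kact lam (H1 v).
Proof.
move=> hv h; rewrite /= (linZ _ _ (lin_Kact h)).
by rewrite (Psi_weight false 0 (Psi_weight true 1 hv) h) !scalerA mulrC.
Qed.

Lemma Hm1_weight lam v : Kwt Kact lam v -> Kwt Kact lam (Hm1 v).
Proof.
move=> hv h; rewrite /= (linN _ (lin_Kact h)) (linZ _ _ (lin_Kact h)).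
by rewrite (Psi_weight true 0 (Psi_weight false 1 hv) h) scalerN !scalerA mulrC.
Qed.

Lemma X_iter_pos b r v :
  X b i r%:Z v = (sgn R b / (qq + qq^-1)) ^+ r *: iter r (comm H1) (X b i 0) v.
Proof.
apply: (ad_recurrenceE (a := fun r : nat => X b i r%:Z) lin_H1) => s w.
by rewrite -X_succ intS addrC.
Qed.

Lemma X_iter_neg b r v : Xminus X b i r.+1 v
  = - ((sgn R b / (qq + qq^-1)) ^+ r *: iter r (comm Hm1) (X b i (-1)) v).
Proof.
rewrite /Xminus; congr (- _).
apply: (ad_recurrenceE (a := fun r : nat => X b i (- r.+1%:Z)) lin_Hm1) => s w.
by rewrite X_pred; congr (_ *: comm _ (X b i _) _); lia.
Qed.

Lemma X_shifts_annihilated b lam1 lam2 : exists2 p : {poly R[i]}, p != 0 &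
  forall l, annihilates (fun v => Kwt Kact lam1 v \/ Kwt Kact lam2 v) p
                        (fun k => X b i (k%:Z + l)).
Proof.
have [p p0 hp] := annihilating_poly_union (hfd lam1) (hfd lam2) (hfd _) (hfd _)
  (fun j => lin_X b j%:Z) (fun j v hv => X_weight b j%:Z hv) (fun j v hv => X_weight b j%:Z hv).
exists p => //; apply: (annihilates_shiftz lin_H1 lin_Hm1 _ _ (X_succ b) (X_pred b) hp).
  by move=> v [/H1_weight | /H1_weight]; [left | right].
by move=> v [/Hm1_weight | /Hm1_weight]; [left | right].
Qed.

Lemma Psi_rational lam : rational_infty_zero (Kwt Kact lam) (Psi true i) (Psi false i).
Proof.
have [p p0 hp] := X_shifts_annihilated true lam (shiftwt rts qpow lam false i).
apply: (rational_infty_zero_of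
  (G := fun z v => (qq - qq^-1) *: comm (X true i z) (X false i 0) v) p0).
  by move=> z v; rewrite comm_X_Xminus0 /PsiZ; case: ifP; case: ifP.
move=> l v hv; under eq_bigr do rewrite scalerA mulrC -scalerA.
rewrite -scaler_sumr (@sum_comm_r _ _ p (fun k => X true i (k%:Z + l))); last exact: lin_X.
rewrite (hp l _ (or_introl hv)) (hp l _ (or_intror (X_weight false 0 hv))).
by rewrite (lin0 (lin_X _ _)) subrr scaler0.
Qed.

Lemma X_rational b lam :
  rational_infty_zero (Kwt Kact lam) (fun r => X b i r%:Z) (Xminus X b i).
Proof.
have [p p0 hp] := X_shifts_annihilated b lam lam.
apply: (rational_infty_zero_of (G := X b i) p0); last by move=> l v hv; apply: hp; left.
by move=> [[|k]|k] v /=; rewrite ?subr0 // sub0r opprK NegzE.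
Qed.

Lemma Psi_plusE r v : Psi true i r v
  = (if r == 0%N then Psi false i 0%N v else 0)
    + (qq - qq^-1) *: comm (X true i r%:Z) (X false i 0) v.
Proof.
rewrite comm_X_Xminus0 /PsiZ; case: r => [|r] /=; first by rewrite addrC subrK.
by rewrite /= subr0 add0r.
Qed.

Lemma Psi_minusE r v : Psi false i r v
  = (if r == 0%N then Psi false i 0%N v else 0)
    + (qq - qq^-1) *: comm (Xminus X true i r) (X false i 0) v.
Proof.
case: r => [|r] /=; first by rewrite /comm (lin0 (lin_X _ _)) subrr scaler0 addr0.
have -> : comm (fun w => - X true i (- r.+1%:Z) w) (X false i 0) v
          = - comm (X true i (- r.+1%:Z)) (X false i 0) v.
  by rewrite /comm (linN _ (lin_X _ _)) opprD opprK.
by rewrite scalerN comm_X_Xminus0 /PsiZ /= !sub0r opprK.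
Qed.

End QLoopRationality.

Theorem proposition3p6
  (R : realType) (n m : nat) (A : 'M[int]_n) (d : 'I_n -> nat)
  (cor : 'M[R[i]]_(n, m)) (rts : 'M[R[i]]_(m, n))
  (hA : is_GCM A) (hd : is_symmetrising A d) (hreal : is_realization A cor rts) :
  (* (i) Yangian *)
  (forall (hbar : R[i]) (V : lmodType R[i]) (hact : 'rV[R[i]]_m -> V -> V)
          (xi : 'I_n -> nat -> V -> V) (x : bool -> 'I_n -> nat -> V -> V),
     hbar != 0 ->
     Yangian_module A d cor rts hbar hact xi x ->
     h_semisimple_findim hact ->
     forall (mu : 'cV[R[i]]_m), (exists v : V, v != 0 /\ hwt hact mu v) ->
     forall i : 'I_n,
       let t := fun v : V => xi i 1%N v - (hbar / 2) *: xi i 0%N (xi i 0%N v) in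
       (* x^{+/-}_{i,r} map V_mu to V_{mu +/- alpha_i} *)
       (forall b r v, hwt hact mu v -> hwt hact (mu + sgn R b *: col i rts) (x b i r v)) /\
       (* rationality of xi_i(u) and x_i^{+/-}(u) on V_mu *)
       rational_at_infty (hwt hact mu) (useries hbar id (xi i)) /\
       (forall b, rational_at_infty (hwt hact mu) (useries hbar (fun _ => 0) (x b i))) /\
       (* x_i^{+/-}(u) = hbar u^{-1} (1 -/+ ad(t_{i,1})/(2 d_i u))^{-1} x^{+/-}_{i,0} *)
       (forall b r v, hwt hact mu v ->
          useries hbar (fun _ => 0) (x b i) r.+1 v
          = (hbar * (sgn R b / (2 * (d i)%:R)) ^+ r) *: iter r (comm t) (x b i 0%N) v) /\
       (* xi_i(u) = 1 + [x_i^+(u), x^-_{i,0}] *)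
       (forall k v, hwt hact mu v ->
          useries hbar id (xi i) k v
          = (if k == 0%N then v else 0)
            + comm (useries hbar (fun _ => 0) (x true i) k) (x false i 0%N) v))
  /\
  (* (ii) quantum loop algebra *)
  (forall (q : R[i]) (qpow : R[i] -> R[i]),
     q != 0 -> (forall k : nat, (0 < k)%N -> q ^+ k != 1) ->
     qpow 1 = q -> (forall a b : R[i], qpow (a + b) = qpow a * qpow b) ->
     forall (W : lmodType R[i]) (Kact : 'rV[R[i]]_m -> W -> W)
            (Psi : bool -> 'I_n -> nat -> W -> W) (X : bool -> 'I_n -> int -> W -> W),
     QL_module A d cor rts q qpow Kact Psi X ->
     K_semisimple_findim Kact ->
     forall (lam : 'rV[R[i]]_m -> R[i]), (exists v : W, v != 0 /\ Kwt Kact lam v) ->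
     forall i : 'I_n,
       let qq := qi d q i in
       let H1 := fun v : W => (qq - qq^-1)^-1 *: Psi false i 0%N (Psi true i 1%N v) in
       let Hm1 := fun v : W => - ((qq - qq^-1)^-1 *: Psi true i 0%N (Psi false i 1%N v)) in
       (* X^{e}_{i,k} maps V_lam to V_{lam + e alpha_i} *)
       (forall b k v, Kwt Kact lam v -> Kwt Kact (shiftwt rts qpow lam b i) (X b i k v)) /\
       (* Psi_i(z)^{+/-} are the expansions at infinity / 0 of one rational function *)
       rational_infty_zero (Kwt Kact lam) (Psi true i) (Psi false i) /\
       (* X_i^{e}(z)^{+/-} are the expansions at infinity / 0 of one rational function *)
       (forall b, rational_infty_zero (Kwt Kact lam) (fun r => X b i r%:Z) (Xminus X b i)) /\
       (* X_i^e(z) = (1 - e ad(H_{i,1})/([2]_{q_i} z))^{-1} X^e_{i,0} (expansion at infinity) *)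
       (forall b r v, Kwt Kact lam v ->
          X b i r%:Z v = (sgn R b / (qq + qq^-1)) ^+ r *: iter r (comm H1) (X b i 0) v) /\
       (* X_i^e(z) = -z (1 - e z ad(H_{i,-1})/[2]_{q_i})^{-1} X^e_{i,-1} (expansion at 0) *)
       (forall b r v, Kwt Kact lam v ->
          Xminus X b i r.+1 v
          = - ((sgn R b / (qq + qq^-1)) ^+ r *: iter r (comm Hm1) (X b i (-1)) v)) /\
       (* Psi_i(z) = Psi^-_{i,0} + (q_i - q_i^{-1}) [X_i^+(z), X^-_{i,0}] at infinity and at 0 *)
       (forall r v, Kwt Kact lam v ->
          Psi true i r v = (if r == 0%N then Psi false i 0%N v else 0)
                           + (qq - qq^-1) *: comm (X true i r%:Z) (X false i 0) v) /\
       (forall r v, Kwt Kact lam v ->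
          Psi false i r v = (if r == 0%N then Psi false i 0%N v else 0)
                           + (qq - qq^-1) *: comm (Xminus X true i r) (X false i 0) v)).
Proof.
have Aii j : A j j = 2 by case: hA.
have d_gt0 j : (0 < d j)%N by case: hd.
have hcr : cor *m rts = map_mx (fun z : int => z%:~R : R[i]) A by case: hreal.
split.
  move=> hbar V hact xi x _ HY [_ hfd] mu _ i t; have Ai := Aii i; have di := d_gt0 i.
  split; first by move=> b r v; apply: (x_weight i HY).
  split; first exact: (xi_rational HY hfd hcr Ai di).
  split; first by move=> b; apply: (x_rational HY hfd hcr Ai di).
  split; first by move=> b r v _; apply: (useries_xE HY hcr Ai di).
  by move=> k v _; apply: (useries_xiE i HY).
move=> q qpow q0 q_not_root qpow1 qpowD W Kact Psi X HQ [_ hfd] lam _ i qq H1 Hm1.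
have Ai := Aii i; have di := d_gt0 i.
split; first by move=> b k v; apply: (X_weight i HQ).
split; first exact: (Psi_rational HQ hfd hcr Ai di q0 q_not_root qpow1 qpowD).
split; first by move=> b; apply: (X_rational HQ hfd hcr Ai di q0 q_not_root qpow1 qpowD).
split; first by move=> b r v _; apply: (X_iter_pos HQ hcr Ai di q0 q_not_root qpow1 qpowD).
split; first by move=> b r v _; apply: (X_iter_neg HQ hcr Ai di q0 q_not_root qpow1 qpowD).
split; first by move=> r v _; apply: (Psi_plusE HQ di q0 q_not_root).
by move=> r v _; apply: (Psi_minusE HQ di q0 q_not_root).
Qed.
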